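(* Let $(s_n)_{n\ge1}$ be a sequence of positive real numbers with $\lim_{n\to\infty} s_n/n=\infty$. Then there exists an irrational $\beta\in\mathbb R\setminus\mathbb Q$ such that the rotation $T(x)=x+\beta \pmod 1$ of $[0,1)$ satisfies \[\liminf_{n\to\infty} s_n\,\|T^n(x)-y\|=\infty\quad\text{for } \lambda\times\lambda\text{-almost every }(x,y)\in[0,1)^2,\] where $\lambda$ is Lebesgue measure.
   Context: $\|t\|=\min_{m\in\mathbb Z}|t-m|$ denotes the distance from $t\in\mathbb R$ to the nearest integer (the circle metric on $[0,1)$). *)

From HB Require Import structures.
From mathcomp Require Import all_boot all_order all_algebra.
From mathcomp Require Import all_classical all_reals all_analysis.
Set Implicit Arguments. Unset Strict Implicit. Unset Printing Implicit Defensive.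
Import Order.TTheory GRing.Theory Num.Theory.
Import numFieldNormedType.Exports.
Local Open Scope classical_set_scope.
Local Open Scope ring_scope.

(* ||t|| = min_{m in Z} |t - m|, the distance to the nearest integer
   (the infimum over Z is attained, so inf = min). *)
Definition dist_int {R : realType} (t : R) : R :=
  inf [set `|t - m%:~R| | m in [set: int]].

Definition fract {R : realType} (t : R) : R := t - (Num.floor t)%:~R.

Definition rotation {R : realType} (beta : R) (x : R) : R := fract (x + beta).

From HB Require Import structures.
From mathcomp Require Import all_boot all_order all_algebra.
From mathcomp Require Import all_classical all_reals all_analysis.
From mathcomp Require Import ring lra zify.
Import Order.TTheory GRing.Theory Num.Theory.
Import numFieldNormedType.Exports.
Import measurable_realfun.
Local Open Scope classical_set_scope.
Local Open Scope ring_scope.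

(* Take beta = sum_k 2^-(m_k) with m_k increasing so fast that beta is a
   Liouville number, hence irrational, and that for n in the k-th block
   2^(e_k) <= n <= 2^(e_(k+1)), n beta agrees modulo 1 with n beta_k up to less
   than 2^-(m_k + k + 1), the partial sum beta_k being a multiple of 2^-(m_k).
   As T^n x = x + n beta modulo 1, ||T^n x - y|| >= 2^-(m_k + k + 1) on that
   block unless x - y lies within 2^-(m_k + k) of the lattice 2^-(m_k) Z.  These
   bad sets have measure O(2^-k) in the unit square, so by Borel-Cantelli almost
   every (x, y) avoids them for all large k.  Finally the e_k are chosen from
   the growth of s_n / n so that s_n 2^-(m_k + k + 1) >= k on the k-th block. *)

Lemma ex_block_index {g : nat -> nat} {k0 n : nat} :
  (forall k, (k < g k)%N) -> (g k0 <= n)%N ->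
  exists2 k, (k0 <= k)%N & (g k <= n < g k.+1)%N.
Proof.
move=> g_gt hn.
have ex : exists k, (g k <= n)%N by exists k0.
have bnd k : (g k <= n)%N -> (k <= n)%N by move/(leq_trans (g_gt k))/ltnW.
have [k gk kmax] := ex_maxnP ex bnd.
exists k; first exact: kmax.
by rewrite gk ltnNge; apply/negP => /kmax; rewrite ltnn.
Qed.

Lemma product_lebesgue_le {R : realType} {A : set (R * R)} {D : set R} {C : R} :
  measurable A -> measurable D -> 0 <= C ->
  (forall x, (lebesgue_measure (xsection A x) <= (C * \1_D x)%:E)%E) ->
  ((lebesgue_measure \x lebesgue_measure) A <= C%:E * lebesgue_measure D)%E.
Proof.
move=> mA mD C0 hA.
apply: (le_trans (y := \int[lebesgue_measure]_x (C * \1_D x)%:E)%E).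
  apply: ge0_le_integral => //.
  - have hm := @measurable_fun_xsection _ _ _ _ _ lebesgue_measure _ mA; exact: hm.
  - by apply/measurable_EFinP; apply: measurable_funM => //; exact: measurable_indic.
  - by move=> x _; exact: hA.
under eq_integral do rewrite EFinM.
rewrite ge0_integralZl_EFin //; last exact/measurable_EFinP/measurable_indic.
by rewrite integral_indic // setIT.
Qed.

Lemma dist_int_ge {R : realType} (t c : R) :
  (forall m : int, c <= `|t - m%:~R|) -> c <= dist_int t.
Proof.
move=> H; apply: lb_le_inf; first by exists `|t - 0%:~R|; exists 0.
by move=> _ [m _ <-]; exact: H.
Qed.

Lemma iter_rotation {R : realType} (b x : R) n :
  exists K : int, iter n (rotation b) x = x + n%:R * b - K%:~R.
Proof.
elim: n => [|n [K IH]]; first by exists 0; rewrite /= mul0r addr0 subr0.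
exists (K + Num.floor (iter n (rotation b) x + b))%R.
rewrite iterS /rotation /fract intrD.
move: (Num.floor _) => F; rewrite IH mulrSr; ring.
Qed.

Lemma sum_halving_le {R : realFieldType} (v : nat -> R) :
  (forall i, 0 <= v i) -> (forall i, 2 * v i.+1 <= v i) ->
  forall a n, \sum_(a <= i < a + n) v i + 2 * v (a + n)%N <= 2 * v a.
Proof.
move=> v0 v2 a; elim=> [|n IH]; first by rewrite addn0 big_geq // add0r.
rewrite addnS big_nat_recr /= ?leq_addr //.
have := v2 (a + n)%N; lra.
Qed.

Section Construction.
Variables (R : realType) (thr : nat -> nat).

Local Notation pow2 n := ((2 ^ n)%:R : R).

Lemma pow2_gt0 n : 0 < pow2 n.
Proof. by rewrite ltr0n expn_gt0. Qed.

Lemma pow2D a b : pow2 (a + b) = pow2 a * pow2 b.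
Proof. by rewrite expnD natrM. Qed.

Lemma pow2_ge2 n : (0 < n)%N -> 2 <= pow2 n.
Proof. by move=> n0; rewrite ler_nat -{1}(expn1 2) leq_exp2l. Qed.

(* [thr M] is a threshold beyond which [s n / n >= M].  The binary digits of
   beta sit at the positions [digit k]; the jump [digit k.+1 - digit k] contains
   [block_exp k.+1 >= thr (growth_target k (digit k))], which makes [s n] large
   enough on the whole block [2 ^ block_exp k.+1 <= n]. *)
Definition growth_target (k m : nat) : nat := (k.+1 * 2 ^ (k.*2 + m + 4))%N.

Fixpoint digit (k : nat) : nat :=
  if k is k'.+1 then
    (digit k' + k' + 2 + (thr (growth_target k' (digit k')) + k'.+1))%N
  else 0%N.

Definition block_exp (k : nat) : nat :=
  if k is k'.+1 then (thr (growth_target k' (digit k')) + k'.+1)%N else 0%N.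

Lemma digitS k : digit k.+1 = (digit k + (k + 2 + block_exp k.+1))%N.
Proof. by rewrite /= !addnA. Qed.

Lemma block_exp_ge k : (k <= block_exp k)%N.
Proof. by case: k => //= k; rewrite leq_addl. Qed.

Definition step (k : nat) : R := (pow2 (digit k))^-1.

Lemma step_gt0 k : 0 < step k.
Proof. by rewrite invr_gt0 pow2_gt0. Qed.

Lemma pow2_digit_step k : pow2 (digit k) * step k = 1.
Proof. by rewrite mulfV // gt_eqF // pow2_gt0. Qed.

Lemma stepS k : step k.+1 = step k / pow2 (k + 2 + block_exp k.+1).
Proof. by rewrite /step digitS pow2D invfM. Qed.

Lemma step_halving k : 2 * step k.+1 <= step k.
Proof.
rewrite stepS; have P2 : 2 <= pow2 (k + 2 + block_exp k.+1).
  by apply: pow2_ge2; rewrite addn2 addSn.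
have := step_gt0 k; move: P2; set P := pow2 _ => P2 s0.
rewrite mulrA ler_pdivrMr; [nra | lra].
Qed.

Definition beta_partial (n : nat) : R := \sum_(0 <= i < n) step i.

Definition liouville_beta : R := limn beta_partial.

Lemma beta_partialD a n :
  beta_partial (a + n) - beta_partial a = \sum_(a <= i < a + n) step i.
Proof.
by rewrite /beta_partial (@big_cat_nat _ _ _ a 0 (a + n)) ?leq_addr //= addrAC subrr add0r.
Qed.

Lemma beta_partial_cvg : cvgn beta_partial.
Proof.
apply: nondecreasing_is_cvgn.
  move=> n m /subnK <-; rewrite addnC -subr_ge0 beta_partialD.
  by apply: sumr_ge0 => i _; exact: ltW (step_gt0 _).
exists 2 => _ [n _ <-].
have := @sum_halving_le _ step (fun i => ltW (step_gt0 i)) step_halving 0 n.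
rewrite add0n /beta_partial; have := step_gt0 n.
rewrite /step /= expn0 invr1; lra.
Qed.

Lemma beta_tail k :
  step k.+1 <= liouville_beta - beta_partial k.+1 <= 2 * step k.+1.
Proof.
have step_ge0 i : 0 <= step i by exact: ltW (step_gt0 i).
apply/andP; split.
- rewrite lerBrDr; apply: limr_ge; first exact: beta_partial_cvg.
  exists k.+2 => // n /= hn.
  have := beta_partialD k.+1 (n - k.+1); rewrite subnKC 1?ltnW // => hd.
  have : step k.+1 <= \sum_(k.+1 <= i < n) step i.
    by rewrite big_ltn //= lerDl; apply: sumr_ge0.
  lra.
- rewrite lerBlDl; apply: limr_le; first exact: beta_partial_cvg.
  exists k.+1 => // n /= hn.
  have := beta_partialD k.+1 (n - k.+1); rewrite subnKC // => hd.
  have := @sum_halving_le _ step step_ge0 step_halving k.+1 (n - k.+1).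
  rewrite subnKC //; have := step_gt0 n; lra.
Qed.

Fixpoint numer (k : nat) : nat :=
  if k is k'.+1 then (numer k' * 2 ^ (k' + 2 + block_exp k'.+1) + 1)%N else 1%N.

Lemma beta_partial_numer k : beta_partial k.+1 = (numer k)%:R * step k.
Proof.
elim: k => [|k IH]; first by rewrite /beta_partial big_nat1 /= mul1r.
rewrite /beta_partial big_nat_recr //= -/(beta_partial k.+1) IH.
rewrite natrD natrM mulrDl mul1r stepS; congr (_ + _).
by field; exact: lt0r_neq0 (pow2_gt0 _).
Qed.

(* The Liouville estimate: the tail after the k-th digit is far smaller than
   any denominator below 2 ^ k. *)
Lemma scaled_tail_bounds k b : (0 < b < 2 ^ k)%N ->
  0 < b%:R * pow2 (digit k) * (liouville_beta - beta_partial k.+1) < 1.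
Proof.
move=> /andP[b0 bk]; have [lo hi] := andP (beta_tail k).
have bP0 : 0 < b%:R * pow2 (digit k) by rewrite mulr_gt0 ?pow2_gt0 ?ltr0n.
apply/andP; split; first by rewrite mulr_gt0 // (lt_le_trans (step_gt0 k.+1)).
apply: (le_lt_trans (y := b%:R * pow2 (digit k) * (2 * step k.+1))).
  by rewrite ler_wpM2l // ltW.
rewrite stepS /step (_ : _ * (2 * _) = 2 * b%:R / pow2 (k + 2 + block_exp k.+1)).
  rewrite ltr_pdivrMr ?pow2_gt0 // mul1r -addnA pow2D.
  have : b%:R < pow2 k :> R by rewrite ltr_nat.
  have : 2 <= pow2 (2 + block_exp k.+1) by apply: pow2_ge2; rewrite add2n.
  have := pow2_gt0 k; nra.
by field; apply/andP; split; apply: lt0r_neq0; exact: pow2_gt0.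
Qed.

Lemma liouville_beta_irrational : irrational liouville_beta.
Proof.
move=> /rationalP [a [b hb]].
have b0 : (0 < b)%N.
  rewrite lt0n; apply/eqP => b0; move: hb; rewrite b0 invr0 mulr0 => hb.
  have := beta_tail 0; rewrite hb beta_partial_numer /= mul1r /step /= expn0 invr1.
  have := step_gt0 1; lra.
have hbeta : b%:R * liouville_beta = a%:~R.
  by rewrite hb mulrCA mulfV ?mulr1 // pnatr_eq0 -lt0n.
pose X : int := (a * (2 ^ digit b)%:Z - b%:Z * (numer b)%:Z)%R.
have hX : X%:~R = b%:R * pow2 (digit b) * (liouville_beta - beta_partial b.+1) :> R.
  have natz n : (n%:Z)%:~R = n%:R :> R by [].
  rewrite beta_partial_numer /X intrD intrN !intrM !natz -hbeta.
  have := pow2_digit_step b; move: (pow2 _) (step b) => P W hPW.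
  rewrite -[in LHS](mulr1 (_ * (numer b)%:R)) -hPW; ring.
have := @scaled_tail_bounds b b; rewrite b0 ltn_expl // -hX ltr0z ltrz1.
by move=> /(_ isT) /andP[]; lia.
Qed.


Definition radius k : R := step k / pow2 k.

Definition center k (j : nat) : R := j%:R * step k - 1.

(* Only the lattice points [J * step k] with [|J| <= 2 ^ digit k], i.e. those in
   [[-1, 1]], are listed: the others are irrelevant for [|z| < 1]. *)
Definition lattice_nbhd k : set R :=
  \big[setU/set0]_(j < (2 ^ digit k).*2.+1)
    `](center k j - radius k), (center k j + radius k)[%classic.

Lemma radius_gt0 k : 0 < radius k.
Proof. by rewrite divr_gt0 ?step_gt0 ?pow2_gt0. Qed.

Lemma radius_le_step k : radius k <= step k.
Proof.
rewrite ler_pdivrMr ?pow2_gt0 //.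
have : 1 <= pow2 k by rewrite ler1n expn_gt0.
have := step_gt0 k; nra.
Qed.

Lemma far_from_lattice k z : `|z| < 1 -> ~ lattice_nbhd k z ->
  forall J : int, radius k <= `|z - J%:~R * step k|.
Proof.
move=> hz hU J; have qw := pow2_digit_step k; have w0 := step_gt0 k.
have [/andP[J_lo J_hi] | J_out] :=
  boolP ((- (2 ^ digit k)%:Z <= J) && (J <= (2 ^ digit k)%:Z))%R.
- pose j := `|(J + (2 ^ digit k)%:Z)%R|%N.
  have jE : (j%:Z = J + (2 ^ digit k)%:Z)%R by rewrite /j gez0_abs //; lia.
  have j_lt : (j < (2 ^ digit k).*2.+1)%N by lia.
  have centerE : center k j = J%:~R * step k.
    rewrite /center (_ : j%:R = (j%:Z)%:~R) //.
    by rewrite jE intrD mulrDl qw addrK.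
  rewrite leNgt; apply/negP => near; apply: hU.
  apply: (@bigsetU_sup _ j _
    (fun j : nat => `](center k j - radius k), (center k j + radius k)[%classic) j_lt).
  by rewrite /= in_itv /= centerE -ltr_distl.
- have J_ge : pow2 (digit k) + 1 <= `|J%:~R : R|.
    have -> : pow2 (digit k) + 1 = ((2 ^ digit k)%:Z + 1)%:~R :> R by rewrite intrD.
    by rewrite -intr_norm ler_int; lia.
  have := lerB_dist (J%:~R * step k) z.
  rewrite normrM (gtr0_norm w0) distrC => h.
  have := radius_le_step k; nra.
Qed.

Lemma dist_int_block k z n K : `|z| < 1 -> ~ lattice_nbhd k z ->
  (n <= 2 ^ block_exp k.+1)%N ->
  radius k / 2 <= dist_int (z + n%:R * liouville_beta - K%:~R).
Proof.
move=> hz hU hn.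
set e := liouville_beta - beta_partial k.+1.
have [e_lo e_hi] := andP (beta_tail k); rewrite -/e in e_lo e_hi.
have e_ge0 : 0 <= e by rewrite (le_trans _ e_lo) // ltW // step_gt0.
have ne_le : n%:R * e <= radius k / 2.
  apply: (le_trans (y := pow2 (block_exp k.+1) * (2 * step k.+1))).
    by apply: ler_pM; rewrite ?ler_nat.
  rewrite stepS !pow2D /radius.
  have := pow2_gt0 k; have := pow2_gt0 (block_exp k.+1).
  move: (pow2 k) (pow2 (block_exp k.+1)) => P Q hQ hP.
  by rewrite le_eqVlt; apply/orP; left; apply/eqP; field; rewrite !lt0r_neq0.
apply: dist_int_ge => m.
pose J : int := ((K + m) * (2 ^ digit k)%:Z - n%:Z * (numer k)%:Z)%R.
have shiftE : z + n%:R * liouville_beta - K%:~R - m%:~R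
    = (z - J%:~R * step k) + n%:R * e.
  have natz i : (i%:Z)%:~R = i%:R :> R by [].
  rewrite /e /J beta_partial_numer !intrD !intrN !intrM !natz /step.
  move: (pow2 (digit k)) (pow2_gt0 (digit k)) => P P0.
  by field; rewrite lt0r_neq0.
rewrite shiftE; have := lerB_dist (z - J%:~R * step k) (- (n%:R * e)).
rewrite opprK normrN (ger0_norm (mulr_ge0 (ler0n _ _) e_ge0)).
have := far_from_lattice k z hz hU J; lra.
Qed.

Variable s : nat -> R.
Hypothesis s_large : forall M n, (thr M <= n)%N -> M%:R <= s n / n%:R.

Lemma s_radius_ge k n : (2 ^ block_exp k.+1 <= n)%N ->
  k.+1%:R <= s n * (radius k.+1 / 2).
Proof.
move=> hn.
have n_gt0 : (0 < n)%N by apply: leq_trans hn; rewrite expn_gt0.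
have target_le : (growth_target k (digit k))%:R * n%:R <= s n.
  rewrite -ler_pdivlMr ?ltr0n //; apply: s_large.
  apply: leq_trans hn; apply: ltnW; apply: leq_trans (ltn_expl _ (leqnn 2)).
  by rewrite /= leq_addr.
have targetE :
    (growth_target k (digit k))%:R * pow2 (block_exp k.+1) * (radius k.+1 / 2)
    = k.+1%:R.
  have E : pow2 (k.*2 + digit k + 4) * pow2 (block_exp k.+1)
      = pow2 (digit k.+1) * pow2 k.+1 * 2.
    by rewrite [2 in RHS](_ : _ = pow2 1) // -!pow2D digitS; congr (2 ^ _)%:R; lia.
  rewrite /growth_target natrM -(mulrA k.+1%:R) E /radius /step.
  move: (pow2 (digit k.+1)) (pow2_gt0 (digit k.+1)) (pow2_gt0 k.+1) => A hA hk.
  by field; rewrite !lt0r_neq0.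
have r_ge0 : 0 <= radius k.+1 / 2 by rewrite divr_ge0 // ltW // radius_gt0.
rewrite -targetE; apply: (le_trans (y := s n * (radius k.+1 / 2))); last by [].
apply: ler_wpM2r => //; apply: le_trans target_le.
by rewrite ler_wpM2l // ler_nat.
Qed.


Lemma liminf_rotation_infty x y : `|x - y| < 1 ->
  (exists K, forall k, (K <= k)%N -> ~ lattice_nbhd k (x - y)) ->
  limn_einf (fun n =>
    (s n * dist_int (iter n (rotation liouville_beta) x - y))%:E) = +oo%E.
Proof.
move=> hz [K hK].
apply: (cvg_limn_einf_sup _).1; apply/cvgeryP/cvgryPge => L.
pose k0 := maxn K.+1 (Num.Def.archi_bound `|L|).
exists (2 ^ block_exp k0)%N => // n /= hn.
have block_gt k : (k < 2 ^ block_exp k)%N.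
  exact: leq_ltn_trans (block_exp_ge k) (ltn_expl _ (leqnn 2)).
have [[|k] hk /andP[lo hi]] := ex_block_index block_gt hn; first by lia.
have [Ki ->] := iter_rotation liouville_beta x n.
rewrite (_ : _ - y = x - y + n%:R * liouville_beta - Ki%:~R); last by ring.
have zk : ~ lattice_nbhd k.+1 (x - y) by apply: hK; lia.
have := dist_int_block _ _ _ Ki hz zk (ltnW hi); have := s_radius_ge _ _ lo.
set c := radius k.+1 / 2; set d := dist_int _ => sc cd.
have c_gt0 : 0 < c by rewrite divr_gt0 ?radius_gt0.
have sn_gt0 : 0 < s n by rewrite -(pmulr_lgt0 _ c_gt0) (lt_le_trans _ sc).
apply: le_trans (ler_wpM2l (ltW sn_gt0) cd); apply: le_trans sc.
have : (Num.Def.archi_bound `|L| <= k.+1)%N by lia.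
rewrite -(ler_nat R); have := archi_boundP (normr_ge0 L).
have := ler_norm L; lra.
Qed.

Local Notation lam := (@lebesgue_measure R).

Definition bad_set k : set (R * R) :=
  (`[0, 1[%classic `*` `[0, 1[%classic) `&`
  ((fun p => p.1 - p.2) @^-1` lattice_nbhd k).

Lemma lattice_nbhd_measurable k : measurable (lattice_nbhd k).
Proof. by apply: bigsetU_measurable => j _; exact: measurable_itv. Qed.

Lemma bad_set_measurable k : measurable (bad_set k).
Proof.
apply: measurableI; first by apply: measurableX; exact: measurable_itv.
have mf : measurable_fun setT (fun p : R * R => p.1 - p.2).
  exact: measurable_realfun.measurable_funB measurable_fst measurable_snd.
by rewrite -[X in measurable X]setTI; exact: mf measurableT _ (lattice_nbhd_measurable k).
Qed.

Lemma xsection_bad_set_le k x : (lam (xsection (bad_set k) x) <=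
  (((2 ^ digit k).*2.+1)%:R * (2 * radius k) * \1_`[0, 1[%classic x)%:E)%E.
Proof.
rewrite indicE; have [hx | hx] := boolP (x \in `[0, 1[%classic); last first.
  rewrite mulr0 (_ : xsection _ x = set0) ?measure0 //.
  apply/seteqP; split => y //=; rewrite /xsection /= in_setE => -[[h _] _].
  exact: (negP hx (mem_set h)).
rewrite mulr1.
pose F j := `](x - center k j - radius k), (x - center k j + radius k)[%classic.
apply: (le_trans (@content_subadditive _ _ _ lam _ F ((2 ^ digit k).*2.+1) _ _ _)).
- by move=> j _; exact: measurable_itv.
- exact: measurable_xsection (bad_set_measurable k).
- move=> y; rewrite /xsection /= in_setE => -[_ /=].
  rewrite /lattice_nbhd -(bigcup_mkord _
    (fun j => `](center k j - radius k), (center k j + radius k)[%classic)).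
  move=> -[j /= hj]; rewrite /= !in_itv /= => /andP[h1 h2].
  apply: (@bigsetU_sup _ j _ F hj).
  by rewrite /F /= in_itv /=; apply/andP; split; lra.
- rewrite (eq_bigr (fun=> (2 * radius k)%:E)); last first.
    move=> j _; rewrite /F /= lebesgue_measure_itv /= lte_fin.
    rewrite ltrD2l gt0_cp ?radius_gt0 // -EFinB; congr (_%:E); ring.
  by rewrite sumEFin lee_fin sumr_const card_ord !mulr_natl.
Qed.

Lemma bad_set_measure_le k : ((lam \x lam) (bad_set k) <= (6 / pow2 k)%:E)%E.
Proof.
have r_gt0 := radius_gt0 k.
have C_ge0 : 0 <= ((2 ^ digit k).*2.+1)%:R * (2 * radius k).
  by rewrite mulr_ge0 // mulr_ge0 // ltW.
apply: le_trans (product_lebesgue_le (bad_set_measurable k) (measurable_itv _)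
  C_ge0 (xsection_bad_set_le k)) _.
rewrite lebesgue_measure_itv /= lte_fin ltr01 ?sube0 ?subr0 mule1 lee_fin.
have step_le1 : step k <= 1 by rewrite invf_le1 ?pow2_gt0 // ler1n expn_gt0.
have qw := pow2_digit_step k.
rewrite (_ : ((2 ^ digit k).*2.+1)%:R = 2 * pow2 (digit k) + 1); last first.
  by rewrite -addn1 -muln2 natrD natrM mulrC.
rewrite /radius (_ : _ * (2 * _) = (pow2 (digit k) * step k * 4 + 2 * step k) / pow2 k).
  by rewrite qw ler_pM2r ?invr_gt0 ?pow2_gt0 //; lra.
by field; rewrite lt0r_neq0 ?pow2_gt0.
Qed.

Lemma bad_set_summable : (\sum_(k <oo) (lam \x lam) (bad_set k) < +oo)%E.
Proof.
apply: le_lt_trans (ltry 12); apply: lime_le.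
  by apply: is_cvg_nneseries => n _ _; exact: measure_ge0.
apply: nearW => N.
apply: (le_trans (y := \sum_(0 <= k < N) (6 / pow2 k)%:E)%E).
  by apply: lee_sum => k _; exact: bad_set_measure_le.
rewrite sumEFin lee_fin.
have v_ge0 i : 0 <= 6 / pow2 i by rewrite divr_ge0 // ltW // pow2_gt0.
have v_half i : 2 * (6 / pow2 i.+1) <= 6 / pow2 i.
  rewrite expnS natrM le_eqVlt; apply/orP; left; apply/eqP.
  by field; rewrite ?lt0r_neq0 ?pow2_gt0.
have := @sum_halving_le _ (fun i => 6 / pow2 i) v_ge0 v_half 0 N.
by rewrite add0n expn0 divr1; have := v_ge0 N; lra.
Qed.

End Construction.

Theorem theorem4p7 (R : realType) (s : nat -> R)
  (s_pos : forall n : nat, (0 < n)%N -> 0 < s n)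
  (s_super : (fun n : nat => s n / n%:R) @ \oo --> +oo) :
  exists beta : R, (@irrational R) beta /\
    {ae ((@lebesgue_measure R) \x (@lebesgue_measure R))%E,
      forall p : R * R,
        p.1 \in `[0, 1[ -> p.2 \in `[0, 1[ ->
        limn_einf (fun n : nat =>
          (s n * dist_int (iter n (rotation beta) p.1 - p.2))%:E) = +oo%E}.
Proof.
have thr_spec M : exists N, forall n, (N <= n)%N -> M%:R <= s n / n%:R.
  by have [N _ HN] := (cvgryPge _).1 s_super M%:R; exists N => n; exact: HN.
pose thr M := proj1_sig (cid (thr_spec M)).
have s_large M n : (thr M <= n)%N -> M%:R <= s n / n%:R.
  exact: (proj2_sig (cid (thr_spec M))).
exists (liouville_beta R thr); split; first exact: liouville_beta_irrational.
exists (lim_sup_set (bad_set R thr)); split.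
- apply: bigcap_measurable => // K _.
  by apply: bigcup_measurable => k _; exact: bad_set_measurable.
- apply: lim_sup_set_cvg0; [exact: bad_set_measurable | exact: bad_set_summable].
move=> [x y] /= not_lim K _; apply: contrapT => hK; apply: not_lim => hx hy.
apply: (@liminf_rotation_infty R thr s s_large x y).
  by move: hx hy; rewrite !in_itv /= ltr_norml => /andP[? ?] /andP[? ?]; lra.
by exists K => k Kk near; apply: hK; exists k => //.
Qed.
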